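(* For every $k\ge2$, the Natarajan dimension of the function class $\mathcal G_k$ (viewed as functions from $\Delta_k$ to the label set $\{e_1,\dots,e_k\}\cong[k]$) equals $k-1$.
   Context: $\Delta_k=\{x\in\mathbb R^k:x\ge0,\sum_ix_i=1\}$, $e_1,\dots,e_k$ the standard basis of $\mathbb R^k$. For $\psi\in\mathbb R^k$, $g_\psi(x):=e_{i^*}$ where $i^*$ is the smallest index minimizing $\|x-e_i\|_1-\psi_i$ over $i\in[k]$; $\mathcal G_k:=\{g_\psi:\psi\in\mathbb R^k\}$. A finite set $C\subseteq\Delta_k$ is N-shattered by a class $\mathcal H$ if there exist $f_0,f_1:C\to\{e_1,\dots,e_k\}$ with $f_0(x)\ne f_1(x)$ for all $x\in C$ such that for every $B\subseteq C$ there is $h\in\mathcal H$ with $h(x)=f_0(x)$ for $x\in B$ and $h(x)=f_1(x)$ for $x\in C\setminus B$. The Natarajan dimension $d_N(\mathcal H)$ is the largest cardinality of an N-shattered set. *)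

From HB Require Import structures.
From mathcomp Require Import all_boot all_order all_algebra.
From mathcomp Require Import reals.
Set Implicit Arguments. Unset Strict Implicit. Unset Printing Implicit Defensive.
Import Order.TTheory GRing.Theory Num.Theory.
Local Open Scope ring_scope.

Section Defs.
Variables (R : realType) (k : nat).

Definition in_simplex (x : 'rV[R]_k) : Prop :=
  (forall i, 0 <= x ord0 i) /\ \sum_(i < k) x ord0 i = 1.

Definition l1_dist_basis (x : 'rV[R]_k) (i : 'I_k) : R :=
  \sum_(j < k) `|x ord0 j - (j == i)%:R|.

Definition gscore (psi : 'I_k -> R) (x : 'rV[R]_k) (i : 'I_k) : R :=
  l1_dist_basis x i - psi i.

Definition is_g_value (psi : 'I_k -> R) (x : 'rV[R]_k) (i : 'I_k) : Prop :=
  (forall j, gscore psi x i <= gscore psi x j) /\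
  (forall j : 'I_k, (j < i)%N -> gscore psi x i < gscore psi x j).

(* The class G_k of functions Delta_k -> [k] (label e_i identified with i);
   a function is only constrained on Delta_k. *)
Definition G_class : ('rV[R]_k -> 'I_k) -> Prop :=
  fun h => exists psi : 'I_k -> R,
    forall x, in_simplex x -> is_g_value psi x (h x).

Definition N_shattered (H : ('rV[R]_k -> 'I_k) -> Prop) (C : seq 'rV[R]_k) : Prop :=
  uniq C /\ (forall x, x \in C -> in_simplex x) /\
  exists f0 f1 : 'rV[R]_k -> 'I_k,
    (forall x, x \in C -> f0 x != f1 x) /\
    forall B : pred 'rV[R]_k,
      exists h, H h /\
        forall x, x \in C -> h x = (if B x then f0 x else f1 x).

Definition natarajan_dim_eq (H : ('rV[R]_k -> 'I_k) -> Prop) (d : nat) : Prop :=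
  (exists C, N_shattered H C /\ size C = d) /\
  (forall C, N_shattered H C -> (size C <= d)%N).

End Defs.

From mathcomp Require Import all_boot all_order all_algebra.
From mathcomp Require Import reals.
From mathcomp Require Import ring lra.
Set Implicit Arguments. Unset Strict Implicit. Unset Printing Implicit Defensive.
Import Order.TTheory GRing.Theory Num.Theory.
Local Open Scope ring_scope.

(* Given m >= k points x_t with candidate labels a_t <> c_t, the vectors
   e_(a_t) - e_(c_t) lie in the hyperplane of sum zero, of dimension k - 1, so
   some nonzero weights w satisfy sum_t w_t (e_(a_t) - e_(c_t)) = 0.  Hence the
   weighted sum of the score gaps at the x_t does not depend on psi; realizing
   the pattern "a_t iff w_t > 0" makes it nonnegative termwise, realizing
   "a_t iff w_t < 0" makes it nonpositive termwise, so every gap with w_t <> 0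
   is a tie.  On a tie both realizations pick the smaller index, yet they pick
   different labels.
   Lower bound: the k - 1 midpoints of the edges [e_0, e_t] of the simplex are
   N-shattered with f_0 = e_0 and f_1 = e_t, taking psi_0 = 0 and
   psi_t = -1/2 or 1/2. *)

Section FirstArgmin.
Variables (R : realDomainType) (k : nat).
Implicit Types (s : 'I_k -> R) (i j : 'I_k).

Definition first_argmin s i : Prop :=
  (forall j, s i <= s j) /\ (forall j, (j < i)%N -> s i < s j).

Definition first_argminb s i : bool :=
  [forall j, s i <= s j] && [forall j : 'I_k, (j < i)%N ==> (s i < s j)].

Lemma first_argminP s i : reflect (first_argmin s i) (first_argminb s i).
Proof.
apply: (iffP andP) => [[/forallP min_i /forallP first_i] | [min_i first_i]].
  by split=> // j; apply/implyP.
by split; apply/forallP => // j; apply/implyP/first_i.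
Qed.

Lemma first_argmin_tie s i j : first_argmin s i -> s j <= s i -> (i <= j)%N.
Proof. by move=> [_ first_i] sji; rewrite leqNgt; apply/negP => /first_i; lra. Qed.

Lemma first_argmin_unique s i j : first_argmin s i -> first_argmin s j -> i = j.
Proof.
move=> mi mj; apply/val_inj/eqP; rewrite eqn_leq.
by rewrite (first_argmin_tie mi (mj.1 i)) (first_argmin_tie mj (mi.1 j)).
Qed.

Lemma first_argmin_strict s i : (forall j, j != i -> s i < s j) -> first_argmin s i.
Proof.
move=> lt_i; split=> [j|j /ltn_eqF ji]; last by apply: lt_i; rewrite -val_eqE ji.
by have [->|/lt_i/ltW] := eqVneq j i.
Qed.

Lemma first_argmin_exists (i0 : 'I_k) s : exists i, first_argmin s i.
Proof.
have [im _ min_im] := arg_minP s (P := predT) (erefl : predT i0).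
pose minimizer := [pred i | [forall j, s i <= s j]].
have min_minimizer : minimizer im by apply/forallP => j; exact: min_im.
have [i /forallP min_i first_i] := arg_minnP val min_minimizer.
exists i; split=> // j ji; rewrite lt_neqAle min_i andbT; apply/negP => /eqP sij.
have : minimizer j by apply/forallP => l; rewrite -sij.
by move=> /first_i; rewrite leqNgt ji.
Qed.

Lemma first_argmin_choice (T : Type) (i0 : 'I_k) (s : T -> 'I_k -> R) :
  exists h : T -> 'I_k, forall x, first_argmin (s x) (h x).
Proof.
exists (fun x => odflt i0 [pick i | first_argminb (s x) i]) => x.
case: pickP => [i /first_argminP //|none].
by have [i /first_argminP] := first_argmin_exists i0 (s x); rewrite none.
Qed.

End FirstArgmin.

Section DependentRows.
Variables (F : fieldType) (m n : nat).

Lemma mxrank_lt_annihilated (M : 'M[F]_(m, n)) (u : 'cV_n) :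
  u != 0 -> M *m u = 0 -> (\rank M < n)%N.
Proof.
move=> u_neq0 Mu0.
have : (u^T <= kermx M^T)%MS by apply/sub_kermxP; rewrite -trmx_mul Mu0 trmx0.
move/mxrankS; rewrite mxrank_ker mxrank_tr rank_rV -trmx0 (inj_eq trmx_inj) u_neq0.
by rewrite subn_gt0.
Qed.

Lemma row_dependent (M : 'M[F]_(m, n)) :
  ~~ row_free M -> exists2 w : 'rV_m, w != 0 & w *m M = 0.
Proof.
rewrite -kermx_eq0 => /rowV0Pn[w /sub_kermxP wM0 w_neq0].
by exists w.
Qed.

End DependentRows.

Section ArgminClassDimension.
Variables (R : realFieldType) (k m : nat).

Lemma basis_differences_dependent (a c : 'I_m -> 'I_k) : (0 < k <= m)%N ->
  exists2 w : 'rV[R]_m, w != 0 &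
    forall psi : 'I_k -> R, \sum_t w 0 t * (psi (a t) - psi (c t)) = 0.
Proof.
case/andP=> k_gt0 le_km.
pose M : 'M[R]_(m, k) := \matrix_t ('e_(a t) - 'e_(c t)).
have M_const0 : M *m (const_mx 1 : 'cV_k) = 0.
  by apply/row_matrixP => t; rewrite row_mul rowK row0 mulmxBl -!rowE !row_const subrr.
have [|w w_neq0 wM0] := row_dependent (M := M).
  rewrite /row_free neq_ltn; apply/orP; left; apply: leq_trans le_km.
  apply: mxrank_lt_annihilated M_const0.
  by apply/cV0Pn; exists (Ordinal k_gt0); rewrite mxE oner_eq0.
exists w => // psi; pose p : 'cV_k := \col_i psi i.
have Mp t : (M *m p) t 0 = psi (a t) - psi (c t).
  have -> : (M *m p) t 0 = row t (M *m p) 0 0 by rewrite [RHS]mxE.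
  by rewrite row_mul rowK mulmxBl -!rowE !mxE.
transitivity ((w *m (M *m p)) 0 0); first by rewrite mxE; apply: eq_bigr => t _; rewrite Mp.
by rewrite mulmxA wM0 mul0mx mxE.
Qed.

Section ScoreGaps.
Variables (f : 'I_m -> 'I_k -> R) (a c : 'I_m -> 'I_k).

Definition realizes_pattern (psi : 'I_k -> R) (S : pred 'I_m) : Prop :=
  forall t, first_argmin (fun j => f t j - psi j) (if S t then a t else c t).

Definition score_gap (psi : 'I_k -> R) t : R :=
  (f t (c t) - psi (c t)) - (f t (a t) - psi (a t)).

Lemma score_gap_sign psi S t :
  realizes_pattern psi S -> if S t then 0 <= score_gap psi t else score_gap psi t <= 0.
Proof.
move=> /(_ t); rewrite /score_gap; case: (S t) => -[min_l _].
  by have := min_l (c t); lra.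
by have := min_l (a t); lra.
Qed.

Lemma score_gap_tie psi S t : realizes_pattern psi S -> score_gap psi t = 0 ->
  if S t then (a t <= c t)%N else (c t <= a t)%N.
Proof.
by move=> /(_ t); rewrite /score_gap; case: (S t) => /first_argmin_tie tie g0; apply: tie; lra.
Qed.

Variable w : 'rV[R]_m.
Hypothesis w_psi : forall psi : 'I_k -> R, \sum_t w 0 t * (psi (a t) - psi (c t)) = 0.

Lemma weighted_score_gap_const psi :
  \sum_t w 0 t * score_gap psi t = \sum_t w 0 t * score_gap (fun=> 0) t.
Proof.
rewrite -[RHS]addr0 -[X in _ = _ + X](w_psi psi) -big_split; apply: eq_bigr => t _ /=.
by rewrite /score_gap; ring.
Qed.

Lemma weighted_score_gap_eq0 psi1 psi2 :
  realizes_pattern psi1 (fun t => 0 < w 0 t) -> realizes_pattern psi2 (fun t => w 0 t < 0) ->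
  forall t, w 0 t * score_gap psi1 t = 0 /\ w 0 t * score_gap psi2 t = 0.
Proof.
move=> psi1P psi2P.
have ge0_1 t : 0 <= w 0 t * score_gap psi1 t.
  by have := score_gap_sign t psi1P; case: ltrgt0P => //= w_t g; nra.
have ge0_2 t : 0 <= - (w 0 t * score_gap psi2 t).
  by have := score_gap_sign t psi2P; case: ltrgt0P => //= w_t g; nra.
have : 0 <= \sum_t w 0 t * score_gap psi1 t by apply: sumr_ge0 => t _; exact: ge0_1.
have : 0 <= \sum_t - (w 0 t * score_gap psi2 t) by apply: sumr_ge0 => t _; exact: ge0_2.
rewrite sumrN !weighted_score_gap_const => sum_ge0_2 sum_ge0_1.
have sum_eq0_1 : \sum_t w 0 t * score_gap psi1 t = 0.
  by rewrite weighted_score_gap_const; lra.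
have sum_eq0_2 : \sum_t - (w 0 t * score_gap psi2 t) = 0.
  by rewrite sumrN weighted_score_gap_const; lra.
move=> t; split; first exact: (psumr_eq0P (fun t _ => ge0_1 t) sum_eq0_1 (i := t)).
by apply/eqP; rewrite -oppr_eq0; apply/eqP/(psumr_eq0P (fun t _ => ge0_2 t) sum_eq0_2).
Qed.

End ScoreGaps.

Lemma first_argmin_not_shattered (f : 'I_m -> 'I_k -> R) (a c : 'I_m -> 'I_k) :
  (0 < k <= m)%N -> (forall t, a t != c t) ->
  ~ (forall S : pred 'I_m, exists psi, realizes_pattern f a c psi S).
Proof.
move=> le_km ac shattered.
have [w w_neq0 w_psi] := basis_differences_dependent a c le_km.
have [psi1 psi1P] := shattered (fun t => 0 < w 0 t).
have [psi2 psi2P] := shattered (fun t => w 0 t < 0).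
have [t0 w_t0] := rV0Pn _ w_neq0.
have [/eqP tie1 /eqP tie2] := weighted_score_gap_eq0 w_psi psi1P psi2P t0.
rewrite !mulf_eq0 (negbTE w_t0) /= in tie1 tie2.
have := score_gap_tie psi1P (eqP tie1); have := score_gap_tie psi2P (eqP tie2).
have := ac t0; rewrite -val_eqE eqn_leq /=.
by case: ltrgt0P w_t0 => // _ _ + le1 le2; rewrite le1 le2.
Qed.

End ArgminClassDimension.

Lemma G_class_shattered_size (R : realType) (k : nat) (C : seq 'rV[R]_k) :
  (0 < k)%N -> N_shattered (@G_class R k) C -> (size C < k)%N.
Proof.
move=> k_gt0 [uniqC [inC [f0 [f1 [f01 shatter]]]]].
rewrite ltnNge; apply/negP => le_kC.
pose x (t : 'I_(size C)) := nth 0 C t.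
have t0 : 'I_(size C) by exists 0%N; apply: leq_trans le_kC.
have index_x t : insubd t0 (index (x t) C) = t.
  by apply: val_inj; rewrite val_insubd index_uniq ?ltn_ord.
apply: (first_argmin_not_shattered (f := fun t => l1_dist_basis (x t))
  (a := fun t => f0 (x t)) (c := fun t => f1 (x t))).
- by rewrite k_gt0.
- by move=> t; apply/f01/mem_nth.
move=> S; have [h [[psi psiP] hB]] := shatter [pred y | S (insubd t0 (index y C))].
exists psi => t.
have -> : S t = [pred y | S (insubd t0 (index y C))] (x t) by rewrite /= index_x.
by rewrite -hB ?mem_nth //; apply/psiP/inC/mem_nth.
Qed.

Lemma sum_indicator (R : pzSemiRingType) (T : finType) (a : T) :
  \sum_i ((i == a)%:R : R) = 1.
Proof. by rewrite (bigD1 a) //= eqxx big1 ?addr0 // => i /negbTE->. Qed.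

Section EdgeMidpoints.
Variables (R : realType) (n : nat).
Local Notation k := n.+1.

Lemma l1_dist_basis_simplex (x : 'rV[R]_k) i :
  in_simplex x -> l1_dist_basis x i = 2 - 2 * x ord0 i.
Proof.
move=> [x_ge0 x_sum1]; rewrite /l1_dist_basis (bigD1 i) //= eqxx.
move: x_sum1; rewrite (bigD1 i) //= => x_sum1.
rewrite (eq_bigr (fun j => x ord0 j)) => [|j /negbTE->]; last by rewrite subr0 ger0_norm.
have : 0 <= \sum_(j < k | j != i) x ord0 j by apply: sumr_ge0.
by move=> S_ge0; rewrite ler0_norm; lra.
Qed.

Definition edge_midpoint (t : 'I_k) : 'rV[R]_k :=
  \row_j (((j == ord0)%:R + (j == t)%:R) / 2).

Lemma edge_midpoint_simplex t : in_simplex (edge_midpoint t).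
Proof.
split=> [j|]; first by rewrite mxE divr_ge0 ?addr_ge0.
under eq_bigr do rewrite mxE.
by rewrite -mulr_suml big_split /= !sum_indicator; lra.
Qed.

Lemma edge_midpoint_inj : injective edge_midpoint.
Proof.
move=> t t' /rowP/(_ t); rewrite !mxE eqxx.
case: (eqVneq t t') => // _ mid_eq; exfalso; move: mid_eq.
by rewrite addr0 /=; lra.
Qed.

Lemma gscore_edge_midpoint psi t j :
  gscore psi (edge_midpoint t) j = 2 - (j == ord0)%:R - (j == t)%:R - psi j.
Proof.
by rewrite /gscore l1_dist_basis_simplex ?mxE; [lra | exact: edge_midpoint_simplex].
Qed.

(* The scores at the midpoint of [e_0, e_t] are 1 at 0, 1 - psi t at t and at
   least 3/2 elsewhere, so the sign of psi t selects the label. *)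
Lemma edge_midpoint_first_argmin psi t (b : bool) :
  t != ord0 -> psi ord0 = 0 -> psi t = (if b then -1/2 else 1/2) ->
  (forall j, j != ord0 -> psi j <= 1/2) ->
  first_argmin (gscore psi (edge_midpoint t)) (if b then ord0 else t).
Proof.
move=> t_neq0 psi0 psit psi_le; apply: first_argmin_strict => j.
rewrite !gscore_edge_midpoint; case: b psit => psit j_neq.
- rewrite eqxx [ord0 == t]eq_sym (negbTE t_neq0) (negbTE j_neq) psi0 /=.
  have [->|_] := eqVneq j t; first by rewrite psit /=; lra.
  by have := psi_le j j_neq; rewrite /=; lra.
- rewrite eqxx (negbTE t_neq0) (negbTE j_neq) psit /=.
  have [->|j_neq0] := eqVneq j ord0; first by rewrite psi0 /=; lra.
  by have := psi_le j j_neq0; rewrite /=; lra.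
Qed.

Lemma G_class_shatters_edge_midpoints :
  N_shattered (@G_class R k) [seq edge_midpoint t | t <- enum (predC1 ord0)].
Proof.
split; first by rewrite map_inj_uniq ?enum_uniq //; exact: edge_midpoint_inj.
split; first by move=> _ /mapP[t _ ->]; exact: edge_midpoint_simplex.
pose label y := odflt ord0 [pick t | y == edge_midpoint t].
have label_mid t : label (edge_midpoint t) = t.
  by rewrite /label; case: pickP => [t' /eqP/edge_midpoint_inj<- //|/(_ t)]; rewrite eqxx.
exists (fun=> ord0), label; split.
  by move=> _ /mapP[t t_neq0 ->]; rewrite label_mid eq_sym; rewrite mem_enum in t_neq0.
move=> B.
pose psi j : R := if j == ord0 then 0 else if B (edge_midpoint j) then -1/2 else 1/2.
have [h hP] := first_argmin_choice ord0 (gscore psi).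
exists h; split; first by exists psi => x _; exact: hP.
move=> _ /mapP[t t_neq0 ->]; rewrite mem_enum inE in t_neq0; rewrite label_mid.
apply: first_argmin_unique (hP _) (edge_midpoint_first_argmin (psi := psi) t_neq0 _ _ _).
- by rewrite /psi eqxx.
- by rewrite /psi (negbTE t_neq0).
- by move=> j /negbTE j_neq0; rewrite /psi j_neq0; case: ifP => _; lra.
Qed.

Lemma G_class_shatters_pred_dim :
  exists C, N_shattered (@G_class R k) C /\ size C = k.-1.
Proof.
exists [seq edge_midpoint t | t <- enum (predC1 ord0)].
split; first exact: G_class_shatters_edge_midpoints.
by rewrite size_map -cardE cardC1 card_ord.
Qed.

End EdgeMidpoints.

Theorem theoremD6 (R : realType) (k : nat) (hk : (2 <= k)%N) :
  natarajan_dim_eq (@G_class R k) k.-1.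
Proof.
case: k hk => [|[|n]] // _; split; first exact: G_class_shatters_pred_dim.
by move=> C /G_class_shattered_size; apply.
Qed.
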